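(* Let $(G,\mathcal F_\bullet G,\mathfrak R)$ be a filtered Rota–Baxter group. Then $(\mathsf{gr}\,G,\mathsf{gr}\,\mathfrak R)$ is a graded Rota–Baxter Lie ring; that is, $\mathsf{gr}\,\mathfrak R$ is an additive map satisfying $[\mathsf{gr}\mathfrak R(a),\mathsf{gr}\mathfrak R(b)]=\mathsf{gr}\mathfrak R\big([\mathsf{gr}\mathfrak R(a),b]+[a,\mathsf{gr}\mathfrak R(b)]+[a,b]\big)$ for all $a,b\in\mathsf{gr}\,G$, and $\mathsf{gr}\mathfrak R(\mathsf{gr}_nG)\subset\mathsf{gr}_nG$ for all $n\ge1$.
   Context: For a group $G$, write $(x,y)=xyx^{-1}y^{-1}$, and for subgroups $H,K$ let $(H,K)$ be the subgroup generated by $(x,y)$, $x\in H$, $y\in K$. A filtered group $(G,\mathcal F_\bullet G)$ is a group with subgroups $G=\mathcal F_1G\supset\mathcal F_2G\supset\cdots$ such that $(\mathcal F_nG,\mathcal F_mG)\subset\mathcal F_{n+m}G$ for all $n,m\ge1$; then each $\mathcal F_nG$ is normal and $\mathsf{gr}_nG=\mathcal F_nG/\mathcal F_{n+1}G$ is an abelian group, written additively: $\bar x+\bar y=\overline{xy}$. Let $\mathsf{gr}\,G=\bigoplus_{n\ge1}\mathsf{gr}_nG$, with the biadditive bracket determined by $[\bar x,\bar y]=\overline{(x,y)}\in\mathsf{gr}_{n+m}G$ for $x\in\mathcal F_nG$, $y\in\mathcal F_mG$; this is a graded Lie ring. A Rota–Baxter group is a group with a map $\mathfrak R$ satisfying $\mathfrak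 R(g)\mathfrak R(h)=\mathfrak R(g\mathfrak R(g)h\mathfrak R(g)^{-1})$; a filtered Rota–Baxter group $(G,\mathcal F_\bullet G,\mathfrak R)$ is a filtered group with a Rota–Baxter operator satisfying $\mathfrak R(\mathcal F_nG)\subset\mathcal F_nG$ for all $n$. The maps $\mathfrak R_n:\mathsf{gr}_nG\to\mathsf{gr}_nG$, $\mathfrak R_n(\bar x)=\overline{\mathfrak R(x)}$, are well-defined group homomorphisms, and $\mathsf{gr}\,\mathfrak R:\mathsf{gr}\,G\to\mathsf{gr}\,G$ is defined by $\mathsf{gr}\mathfrak R(a_1+\cdots+a_k)=\mathfrak R_{i_1}(a_1)+\cdots+\mathfrak R_{i_k}(a_k)$ for $a_j\in\mathsf{gr}_{i_j}G$. *)

From Stdlib Require Import Arith List.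
Import ListNotations.
Set Implicit Arguments.

Record group := Group {
  gcar :> Type;
  gmul : gcar -> gcar -> gcar;
  ginv : gcar -> gcar;
  gone : gcar;
  gmulA : forall x y z, gmul x (gmul y z) = gmul (gmul x y) z;
  gmul1 : forall x, gmul gone x = x;
  gmulV : forall x, gmul (ginv x) x = gone
}.

Arguments gmul {g}. Arguments ginv {g}. Arguments gone {g}.

Section Defs.
Context {G : group}.

Definition comm (x y : G) : G := gmul (gmul (gmul x y) (ginv x)) (ginv y).

Definition is_subgroup (P : G -> Prop) : Prop :=
  P gone /\ (forall x y, P x -> P y -> P (gmul x y)) /\ (forall x, P x -> P (ginv x)).

(* Filtration F_1 = G ⊃ F_2 ⊃ ... with (F_n, F_m) ⊂ F_{n+m}, n,m >= 1.
   Since F_{n+m} is a subgroup, (F_n,F_m) ⊂ F_{n+m} is the same as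
   containing all commutators (x,y), x ∈ F_n, y ∈ F_m.  Index 0 is unused. *)
Definition is_filtration (F : nat -> G -> Prop) : Prop :=
  (forall x, F 1 x) /\
  (forall n, 1 <= n -> is_subgroup (F n)) /\
  (forall n x, 1 <= n -> F (S n) x -> F n x) /\
  (forall n m x y, 1 <= n -> 1 <= m -> F n x -> F m y -> F (n + m) (comm x y)).

Definition is_RB (R : G -> G) : Prop :=
  forall g h, gmul (R g) (R h) = R (gmul (gmul (gmul g (R g)) h) (ginv (R g))).

Definition is_filtered_RB (F : nat -> G -> Prop) (R : G -> G) : Prop :=
  is_filtration F /\ is_RB R /\ (forall n x, 1 <= n -> F n x -> F n (R x)).

(* Elements of gr G = ⊕_{n>=1} F_n/F_{n+1} are represented by families
   a : nat -> G with a n ∈ F_n (n >= 1), whose class in gr_n G vanishes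
   for all large n (finite support); a 0 is ignored. *)
Definition gr_elem (F : nat -> G -> Prop) (a : nat -> G) : Prop :=
  (forall n, 1 <= n -> F n (a n)) /\
  (exists N, forall n, N <= n -> F (S n) (a n)).

Definition gr_eq (F : nat -> G -> Prop) (a b : nat -> G) : Prop :=
  forall n, 1 <= n -> F (S n) (gmul (a n) (ginv (b n))).

Definition gr_add (a b : nat -> G) : nat -> G := fun n => gmul (a n) (b n).

Definition gprod (l : list G) : G := fold_right gmul gone l.

(* bracket: degree-k component is sum_{i+j=k, i,j>=1} [a_i, b_j]
   = class of the product of the commutators (a_i, b_{k-i}), i = 1..k-1 *)
Definition gr_bracket (a b : nat -> G) : nat -> G :=
  fun k => gprod (map (fun i => comm (a i) (b (k - i))) (seq 1 (k - 1))).

Definition gr_R (R : G -> G) (a : nat -> G) : nat -> G := fun n => R (a n).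

Definition gr_homog (F : nat -> G -> Prop) (n : nat) (a : nat -> G) : Prop :=
  forall m, 1 <= m -> m <> n -> F (S m) (a m).

End Defs.

(** The Rota–Baxter identity [R x R y = R (x R(x) y R(x)^-1)] makes [R] additive
    modulo one filtration degree higher, since [R(x) y R(x)^-1] and [y] agree there.
    For the bracket, applying the identity to both [R x R y] and [R y R x] gives the
    exact formula [(R x, R y) = conj_{R y R x} (R h)], where [h] is conjugate to
    [v^-1 u] with [u = x R(x) y R(x)^-1] and [v = y R(y) x R(y)^-1].  The element
    [v^-1 u] is a product of conjugates of [(R x, y)], [(x, R y)] and [(x, y)], so
    modulo [F_(i+j+1)] conjugations can be dropped and the three commutators
    reordered, which is exactly the graded Rota–Baxter identity.  Summing over the
    homogeneous components uses additivity once more. *)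

From Stdlib Require Import Arith List Lia.

Section GroupLaws.
Context {G : group}.
Implicit Types x y : G.

Lemma mulgV x : gmul x (ginv x) = gone.
Proof.
  rewrite <- (gmul1 _ (gmul x (ginv x))), <- (gmulV _ (ginv x)) at 1.
  rewrite <- gmulA, (gmulA _ (ginv x) x), gmulV, gmul1. apply gmulV.
Qed.

Lemma mulg1 x : gmul x gone = x.
Proof. rewrite <- (gmulV _ x), gmulA, mulgV. apply gmul1. Qed.

Lemma mulKg x y : gmul (ginv x) (gmul x y) = y.
Proof. now rewrite gmulA, gmulV, gmul1. Qed.

Lemma mulKVg x y : gmul x (gmul (ginv x) y) = y.
Proof. now rewrite gmulA, mulgV, gmul1. Qed.

Lemma invg_unique x y : gmul x y = gone -> ginv x = y.
Proof. intro E. now rewrite <- (mulg1 (ginv x)), <- E, mulKg. Qed.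

Lemma invMg x y : ginv (gmul x y) = gmul (ginv y) (ginv x).
Proof.
  apply invg_unique.
  now rewrite <- gmulA, (gmulA _ y), mulgV, gmul1, mulgV.
Qed.

Lemma invgK x : ginv (ginv x) = x.
Proof. apply invg_unique, gmulV. Qed.

Lemma invg1 : ginv (@gone G) = gone.
Proof. apply invg_unique, gmul1. Qed.

End GroupLaws.

Definition conjg {G : group} (z c : G) : G := gmul (gmul z c) (ginv z).

Global Hint Rewrite <- gmulA : grp.
Global Hint Rewrite gmul1 gmulV @mulg1 @mulgV @mulKg @mulKVg @invMg @invgK @invg1 : grp.

Ltac gsimpl := unfold comm, conjg in *; autorewrite with grp in *.

Section RotaBaxterIdentities.
Context {G : group} {R : G -> G} (HR : is_RB R).

Lemma RB_one : R gone = gone.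
Proof.
  pose proof (HR gone gone) as E. gsimpl.
  rewrite <- (mulKg (R gone) (R gone)), E. apply gmulV.
Qed.

Lemma RB_comm_conj x y :
  let u := gmul (gmul (gmul x (R x)) y) (ginv (R x)) in
  let v := gmul (gmul (gmul y (R y)) x) (ginv (R y)) in
  comm (R x) (R y) =
  conjg (gmul (R y) (R x)) (R (conjg (ginv (gmul (R y) (R x))) (gmul (ginv v) u))).
Proof.
  intros u v.
  set (h := conjg (ginv (gmul (R y) (R x))) (gmul (ginv v) u)).
  assert (E : gmul (gmul (R y) (R x)) (R h) = gmul (R x) (R y)).
  { rewrite (HR y x), HR, (HR x y). f_equal.
    rewrite <- (HR y x). unfold h, u, v. gsimpl. reflexivity. }
  unfold comm, conjg. rewrite <- E. gsimpl. reflexivity.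
Qed.

End RotaBaxterIdentities.

Lemma comm_defect_decomp {G : group} (x y X Y : G) :
  gmul (ginv (gmul (gmul (gmul y Y) x) (ginv Y))) (gmul (gmul (gmul x X) y) (ginv X)) =
  gmul (gmul (conjg (ginv x) (comm x Y))
             (conjg (gmul (gmul (ginv x) (ginv y)) x) (comm X y)))
       (conjg (gmul (ginv x) (ginv y)) (comm x y)).
Proof. gsimpl. reflexivity. Qed.

Definition eqmod {G : group} (F : nat -> G -> Prop) (k : nat) (u v : G) : Prop :=
  F k (gmul u (ginv v)).

Section Filtration.
Context {G : group} {F : nat -> G -> Prop} (HF : is_filtration F).

Lemma filt_le n m x : 1 <= n -> n <= m -> F m x -> F n x.
Proof.
  intros Hn Hnm. induction Hnm as [|m Hnm IH]; auto.
  intro Hx. apply IH. destruct HF as (_ & _ & Hdec & _). apply Hdec; [lia | exact Hx].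
Qed.

Lemma filt1 n : 1 <= n -> F n gone.
Proof. intro Hn. destruct HF as (_ & Hsub & _). apply (Hsub n Hn). Qed.

Lemma filt_mul n x y : 1 <= n -> F n x -> F n y -> F n (gmul x y).
Proof. intro Hn. destruct HF as (_ & Hsub & _). apply (Hsub n Hn). Qed.

Lemma filt_inv n x : 1 <= n -> F n x -> F n (ginv x).
Proof. intro Hn. destruct HF as (_ & Hsub & _). apply (Hsub n Hn). Qed.

Lemma filt_comm n m x y : 1 <= n -> 1 <= m -> F n x -> F m y -> F (n + m) (comm x y).
Proof. destruct HF as (_ & _ & _ & Hcomm). apply Hcomm. Qed.

Lemma filt_comm_succ n z c : 1 <= n -> F n c -> F (S n) (comm z c).
Proof. intros Hn Hc. apply (filt_comm 1 n); auto. apply (proj1 HF). Qed.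

Lemma filt_conj n z c : 1 <= n -> F n c -> F n (conjg z c).
Proof.
  intros Hn Hc. replace (conjg z c) with (gmul (comm z c) c) by (gsimpl; reflexivity).
  apply filt_mul; auto. apply (filt_le n (S n)); auto. apply filt_comm_succ; auto.
Qed.

Lemma eqmod_refl k u : 1 <= k -> eqmod F k u u.
Proof. intros. unfold eqmod. gsimpl. now apply filt1. Qed.

Lemma eqmod_sym k u v : 1 <= k -> eqmod F k u v -> eqmod F k v u.
Proof. unfold eqmod. intros Hk E. apply filt_inv in E; auto. gsimpl. exact E. Qed.

Lemma eqmod_trans k u v w : 1 <= k -> eqmod F k u v -> eqmod F k v w -> eqmod F k u w.
Proof.
  unfold eqmod. intros Hk E1 E2. pose proof (filt_mul _ _ _ Hk E1 E2) as E. gsimpl. exact E.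
Qed.

Lemma eqmod_mul k u u' v v' :
  1 <= k -> eqmod F k u u' -> eqmod F k v v' -> eqmod F k (gmul u v) (gmul u' v').
Proof.
  unfold eqmod. intros Hk E1 E2.
  pose proof (filt_mul _ _ _ Hk (filt_conj k u _ Hk E2) E1) as E. gsimpl. exact E.
Qed.

Lemma filt_eqmod k u v : 1 <= k -> eqmod F (S k) u v -> F k v -> F k u.
Proof.
  unfold eqmod. intros Hk E Hv. apply (filt_le k (S k)) in E; auto.
  pose proof (filt_mul _ _ _ Hk E Hv) as Hu. gsimpl. exact Hu.
Qed.

Lemma eqmod_mulC k z c : 1 <= k -> F k c -> eqmod F (S k) (gmul z c) (gmul c z).
Proof.
  unfold eqmod. intros Hk Hc. pose proof (filt_comm_succ k z c Hk Hc) as E. gsimpl. exact E.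
Qed.

Lemma eqmod_conj k z c : 1 <= k -> F k c -> eqmod F (S k) (conjg z c) c.
Proof.
  unfold eqmod. intros Hk Hc. pose proof (filt_comm_succ k z c Hk Hc) as E. gsimpl. exact E.
Qed.

Lemma filt_gprod k (f : nat -> G) l :
  1 <= k -> (forall i, In i l -> F k (f i)) -> F k (gprod (map f l)).
Proof.
  intros Hk. induction l as [|a l IH]; intros Hl; simpl.
  - now apply filt1.
  - apply filt_mul; auto. apply Hl; simpl; auto. apply IH. intros; apply Hl; simpl; auto.
Qed.

Lemma eqmod_gprod k (f g : nat -> G) l :
  1 <= k -> (forall i, In i l -> eqmod F k (f i) (g i)) ->
  eqmod F k (gprod (map f l)) (gprod (map g l)).
Proof.
  intros Hk. induction l as [|a l IH]; intros Hl; simpl.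
  - now apply eqmod_refl.
  - apply eqmod_mul; auto. apply Hl; simpl; auto. apply IH. intros; apply Hl; simpl; auto.
Qed.

Lemma gprod_mul_eqmod k (f g : nat -> G) l :
  1 <= k -> (forall i, In i l -> F k (f i) /\ F k (g i)) ->
  eqmod F (S k) (gprod (map (fun i => gmul (f i) (g i)) l))
                (gmul (gprod (map f l)) (gprod (map g l))).
Proof.
  intros Hk. induction l as [|a l IH]; intros Hl; simpl.
  - gsimpl. apply eqmod_refl; lia.
  - assert (Hl' : forall i, In i l -> F k (f i) /\ F k (g i)) by (intros; apply Hl; simpl; auto).
    destruct (Hl a (or_introl eq_refl)) as [Hfa Hga].
    apply eqmod_trans with (gmul (gmul (f a) (g a)) (gmul (gprod (map f l)) (gprod (map g l))));
      [lia | apply eqmod_mul; auto; apply eqmod_refl; lia |].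
    rewrite <- !gmulA. apply eqmod_mul; [lia | apply eqmod_refl; lia |].
    rewrite !gmulA. apply eqmod_mul; [lia | | apply eqmod_refl; lia].
    apply eqmod_mulC; auto. apply filt_gprod; auto. intros; apply Hl'; auto.
Qed.

End Filtration.

Section FilteredRotaBaxter.
Context {G : group} {F : nat -> G -> Prop} {R : G -> G} (HRB : is_filtered_RB F R).

Let HF : is_filtration F := proj1 HRB.
Let HR : is_RB R := proj1 (proj2 HRB).
Let HRF : forall n x, 1 <= n -> F n x -> F n (R x) := proj2 (proj2 HRB).

(* [x y = x R(x) y' R(x)^-1] with [y'] conjugate to [y], and [R x R y' = R (x y)]. *)
Lemma RB_mul_eqmod_left k x y : 1 <= k -> F k y -> eqmod F k (R (gmul x y)) (R x).
Proof.
  intros Hk Hy.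
  set (y' := conjg (ginv (R x)) y).
  assert (E : R (gmul x y) = gmul (R x) (R y')).
  { rewrite HR. f_equal. unfold y'. gsimpl. reflexivity. }
  unfold eqmod. rewrite E.
  pose proof (filt_conj HF k (R x) _ Hk (HRF k y' Hk (filt_conj HF k _ _ Hk Hy))) as Hc.
  gsimpl. exact Hc.
Qed.

Lemma RB_eqmod k u v : 1 <= k -> eqmod F k u v -> eqmod F k (R u) (R v).
Proof.
  intros Hk Huv.
  assert (Hw : F k (gmul (ginv v) u)).
  { pose proof (filt_conj HF k (ginv v) _ Hk Huv) as Hc. gsimpl. exact Hc. }
  pose proof (RB_mul_eqmod_left k v _ Hk Hw) as E. gsimpl. exact E.
Qed.

Lemma RB_mul_eqmod k u v :
  1 <= k -> F k u -> F k v -> eqmod F (S k) (R (gmul u v)) (gmul (R u) (R v)).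
Proof.
  intros Hk Hu Hv. rewrite (HR u v).
  assert (Hc : F (S k) (comm (ginv v) (R u))).
  { apply (filt_le HF (S k) (k + k)); [lia | lia |].
    apply (filt_comm HF); auto. apply (filt_inv HF); auto. }
  replace (gmul (gmul (gmul u (R u)) v) (ginv (R u)))
    with (gmul (gmul u v) (comm (ginv v) (R u))) by (gsimpl; reflexivity).
  apply (eqmod_sym HF); auto. apply RB_mul_eqmod_left; auto.
Qed.

Lemma RB_gprod_eqmod k (f : nat -> G) l :
  1 <= k -> (forall i, In i l -> F k (f i)) ->
  eqmod F (S k) (R (gprod (map f l))) (gprod (map (fun i => R (f i)) l)).
Proof.
  intros Hk. induction l as [|a l IH]; intros Hl; simpl.
  - rewrite (RB_one HR). apply (eqmod_refl HF); auto.
  - assert (Hl' : forall i, In i l -> F k (f i)) by (intros; apply Hl; simpl; auto).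
    apply (eqmod_trans HF) with (gmul (R (f a)) (R (gprod (map f l)))); [auto | |].
    + apply RB_mul_eqmod; auto. apply Hl; simpl; auto. apply (filt_gprod HF); auto.
    + apply (eqmod_mul HF); auto. apply (eqmod_refl HF); auto.
Qed.

Lemma RB_comm_eqmod i j x y :
  1 <= i -> 1 <= j -> F i x -> F j y ->
  eqmod F (S (i + j)) (comm (R x) (R y))
    (R (gmul (gmul (comm (R x) y) (comm x (R y))) (comm x y))).
Proof.
  intros Hi Hj Hx Hy. assert (Hk : 1 <= i + j) by lia.
  assert (HX : F i (R x)) by auto.
  assert (HY : F j (R y)) by auto.
  assert (H1 : F (i + j) (comm (R x) y)) by (apply (filt_comm HF); auto).
  assert (H2 : F (i + j) (comm x (R y))) by (apply (filt_comm HF); auto).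
  assert (H3 : F (i + j) (comm x y)) by (apply (filt_comm HF); auto).
  rewrite (RB_comm_conj HR x y). cbv zeta.
  set (w := gmul (ginv _) _).
  set (t := gmul (gmul (comm (R x) y) (comm x (R y))) (comm x y)).
  assert (Hwt : eqmod F (S (i + j)) w t).
  { unfold w. rewrite comm_defect_decomp.
    apply (eqmod_trans HF)
      with (gmul (gmul (comm x (R y)) (comm (R x) y)) (comm x y)); [lia | |].
    - apply (eqmod_mul HF); [lia | apply (eqmod_mul HF); [lia | |] |]; apply (eqmod_conj HF); auto.
    - apply (eqmod_mul HF); [lia | apply (eqmod_mulC HF); auto | apply (eqmod_refl HF); lia]. }
  assert (Ht : F (i + j) t) by (apply (filt_mul HF); [lia | apply (filt_mul HF) |]; auto).
  assert (Hw : F (i + j) w) by (apply (filt_eqmod HF _ _ t); auto).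
  apply (eqmod_trans HF) with (R (conjg (ginv (gmul (R y) (R x))) w)); [lia | |].
  - apply (eqmod_conj HF); auto. apply HRF, (filt_conj HF); auto.
  - apply RB_eqmod; [lia |].
    apply (eqmod_trans HF) with w; [lia | apply (eqmod_conj HF); auto | exact Hwt].
Qed.

Lemma RB_bracket_eqmod (a b : nat -> G) n :
  1 <= n -> (forall i, 1 <= i -> F i (a i)) -> (forall j, 1 <= j -> F j (b j)) ->
  eqmod F (S n) (gr_bracket (gr_R R a) (gr_R R b) n)
    (R (gmul (gmul (gr_bracket (gr_R R a) b n) (gr_bracket a (gr_R R b) n))
             (gr_bracket a b n))).
Proof.
  intros Hn Ha Hb. unfold gr_bracket, gr_R.
  set (l := seq 1 (n - 1)).
  assert (Hidx : forall i, In i l -> 1 <= i /\ 1 <= n - i /\ i + (n - i) = n).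
  { intros i Hi. apply in_seq in Hi. lia. }
  set (c1 := fun i => comm (R (a i)) (b (n - i))).
  set (c2 := fun i => comm (a i) (R (b (n - i)))).
  set (c3 := fun i => comm (a i) (b (n - i))).
  assert (Hc : forall i, In i l -> F n (c1 i) /\ F n (c2 i) /\ F n (c3 i)).
  { intros i Hi. destruct (Hidx i Hi) as (H1 & H2 & Hsum). rewrite <- Hsum.
    unfold c1, c2, c3. repeat split; apply (filt_comm HF); auto. }
  change (eqmod F (S n) (gprod (map (fun i => comm (R (a i)) (R (b (n - i)))) l))
            (R (gmul (gmul (gprod (map c1 l)) (gprod (map c2 l))) (gprod (map c3 l))))).
  apply (eqmod_trans HF)
    with (gprod (map (fun i => R (gmul (gmul (c1 i) (c2 i)) (c3 i))) l)); [lia | |].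
  { apply (eqmod_gprod HF); [lia |]. intros i Hi.
    destruct (Hidx i Hi) as (H1 & H2 & Hsum).
    pose proof (RB_comm_eqmod i (n - i) (a i) (b (n - i)) H1 H2 (Ha i H1) (Hb _ H2)) as E.
    rewrite Hsum in E. exact E. }
  apply (eqmod_trans HF)
    with (R (gprod (map (fun i => gmul (gmul (c1 i) (c2 i)) (c3 i)) l))); [lia | |].
  { apply (eqmod_sym HF); [lia |]. apply RB_gprod_eqmod; auto.
    intros i Hi. destruct (Hc i Hi) as (H1 & H2 & H3).
    apply (filt_mul HF); [lia | apply (filt_mul HF) |]; auto. }
  apply RB_eqmod; [lia |].
  apply (eqmod_trans HF)
    with (gmul (gprod (map (fun i => gmul (c1 i) (c2 i)) l)) (gprod (map c3 l))); [lia | |].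
  - apply (gprod_mul_eqmod HF); auto. intros i Hi. destruct (Hc i Hi) as (H1 & H2 & H3).
    split; [apply (filt_mul HF) |]; auto.
  - apply (eqmod_mul HF); [lia | | apply (eqmod_refl HF); auto].
    apply (gprod_mul_eqmod HF); auto. intros i Hi. apply Hc in Hi. tauto.
Qed.

End FilteredRotaBaxter.

Theorem theorem5p11 (G : group) (F : nat -> G -> Prop) (R : G -> G) :
  is_filtered_RB F R ->
  (* gr R is a well-defined map gr G -> gr G *)
  (forall a, gr_elem F a -> gr_elem F (gr_R R a)) /\
  (forall a b, gr_elem F a -> gr_elem F b -> gr_eq F a b ->
     gr_eq F (gr_R R a) (gr_R R b)) /\
  (* additive *)
  (forall a b, gr_elem F a -> gr_elem F b ->
     gr_eq F (gr_R R (gr_add a b)) (gr_add (gr_R R a) (gr_R R b))) /\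
  (* Rota–Baxter identity *)
  (forall a b, gr_elem F a -> gr_elem F b ->
     gr_eq F (gr_bracket (gr_R R a) (gr_R R b))
       (gr_R R (gr_add (gr_add (gr_bracket (gr_R R a) b) (gr_bracket a (gr_R R b)))
                       (gr_bracket a b)))) /\
  (* gr R preserves each gr_n G *)
  (forall n a, 1 <= n -> gr_elem F a -> gr_homog F n a -> gr_homog F n (gr_R R a)).
Proof.
  intro HRB. pose proof HRB as (_ & _ & HRF).
  split; [| split; [| split; [| split]]].
  - intros a [Ha [N HN]]. split; [intros n Hn | exists N; intros n Hn]; apply HRF; auto; lia.
  - intros a b _ _ Hab n Hn. apply (RB_eqmod HRB); [lia | now apply Hab].
  - intros a b [Ha _] [Hb _] n Hn. apply (RB_mul_eqmod HRB); auto.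
  - intros a b [Ha _] [Hb _] n Hn. apply (RB_bracket_eqmod HRB); auto.
  - intros n a Hn _ Hh m Hm Hmn. apply HRF; auto; lia.
Qed.
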